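(* Let $n\geq 1$. For $0\leq k\leq n-1$ let $A_{n,k}$ be the set of pairs of nonnegative integers $(i,j)$ such that $$i\geq \frac{k(k+1)}{2},\qquad j\geq \frac{(n-k-1)(n-k)}{2},\qquad i+j\leq \frac{n(n-1)}{2},$$ and let $A_n=\bigcup_{k=0}^{n-1}A_{n,k}$. Then there exists a Gog triangle of size $n$ with exactly $i$ inversions and exactly $j$ coinversions if and only if $(i,j)\in A_n$. Moreover, if $i=\frac{k(k+1)}{2}$ and $j=\frac{(n-k-1)(n-k)}{2}$ for some $k\in\{0,\dots,n-1\}$, then there is a unique Gog triangle of size $n$ with $i$ inversions and $j$ coinversions, and its bottom entry $X_{1,1}$ equals $n-k$.
   Context: A Gelfand–Tsetlin triangle of size $n$ is an array $X=(X_{i,j})_{n\geq i\geq j\geq 1}$ of positive integers (row $i$ consists of $X_{i,1},\dots,X_{i,i}$; row $n$ is the top row and row $1$, consisting of the single entry $X_{1,1}$, is the bottom) such that $X_{i+1,j}\leq X_{i,j}\leq X_{i+1,j+1}$ for all $n-1\geq i\geq j\geq 1$. A Gog triangle of size $n$ is a Gelfand–Tsetlin triangle of size $n$ whose rows are strictly increasing ($X_{i,j}<X_{i,j+1}$) and whose top row is $X_{n,j}=j$ for $1\leq j\leq n$. An inversion of a Gog triangle $X$ is a pair $(i,j)$ (with $n-1\geq i\geq j\geq 1$) such that $X_{i,j}=X_{i+1,j}$; a coinversion is a pair $(i,j)$ such that $X_{i,j}=X_{i+1,j+1}$. *)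

From mathcomp Require Import all_boot.
Set Implicit Arguments. Unset Strict Implicit. Unset Printing Implicit Defensive.

(* A triangular array is modelled as X : nat -> nat -> nat, with X i j the
   entry X_{i,j}; only the entries with 1 <= j <= i <= n are meaningful. *)

Definition in_tri (n i j : nat) : bool := (1 <= j) && (j <= i) && (i <= n).

Definition GT_triangle (n : nat) (X : nat -> nat -> nat) : Prop :=
  (forall i j, in_tri n i j -> 0 < X i j) /\
  (forall i j, 1 <= j -> j <= i -> i <= n.-1 ->
     X i.+1 j <= X i j /\ X i j <= X i.+1 j.+1).

Definition Gog (n : nat) (X : nat -> nat -> nat) : Prop :=
  GT_triangle n X /\
  (forall i j, 1 <= j -> j < i -> i <= n -> X i j < X i j.+1) /\
  (forall j, 1 <= j -> j <= n -> X n j = j).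

Definition inversions (n : nat) (X : nat -> nat -> nat) : nat :=
  \sum_(1 <= i < n) \sum_(1 <= j < i.+1) (X i j == X i.+1 j).

Definition coinversions (n : nat) (X : nat -> nat -> nat) : nat :=
  \sum_(1 <= i < n) \sum_(1 <= j < i.+1) (X i j == X i.+1 j.+1).

Definition in_A_nk (n k i j : nat) : Prop :=
  (k * k.+1)./2 <= i /\ ((n - k - 1) * (n - k))./2 <= j /\
  i + j <= (n * (n - 1))./2.

Definition in_A (n i j : nat) : Prop := exists2 k, k <= n - 1 & in_A_nk n k i j.

From mathcomp Require Import all_boot zify.
Set Implicit Arguments. Unset Strict Implicit. Unset Printing Implicit Defensive.

(* Removing the first column or the diagonal of a Gog triangle leaves an
   interlaced triangle whose top row is a shift of [1, ..., n-1].  Down the first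
   column the entries decrease weakly from [X 1 1] to [1], and along the diagonal
   they increase weakly from [X 1 1] to [n]; so the first column holds at least
   [n - X 1 1] inversions and the diagonal at least [X 1 1 - 1] coinversions.
   Recursing into the smaller triangle shows that for every [a] there are at least
   'C(a+1, 2) inversions or at least 'C(n+1-a, 2) coinversions; since no entry is
   both an inversion and a coinversion, this places (i, j) in A_n.  At a corner
   point the same counting pins down [X 1 1 = n - k] and, recursively, every
   other entry.  Conversely, starting from the staircase [X i j = j], a triangle
   grows by one size when a new diagonal is appended, and the new diagonal can be
   chosen to create any admissible number of inversions and coinversions. *)

Lemma bin2S x : 'C(x.+1, 2) = 'C(x, 2) + x.
Proof. by rewrite binS bin1. Qed.

Lemma bin2_small x : x <= 1 -> 'C(x, 2) = 0.
Proof. by case: x => [|[|x]]. Qed.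

Lemma bin2_add k t : 'C(k.+1 + t, 2) = 'C(k.+1, 2) + 'C(t.+1, 2) + k * t.
Proof.
elim: t => [|t IH]; first by rewrite !addn0 muln0 addn0.
by rewrite addnS bin2S IH (bin2S t.+1) mulnS; lia.
Qed.

Lemma half_mulnS k : (k * k.+1)./2 = 'C(k.+1, 2).
Proof. by rewrite bin2 mulnC. Qed.

Lemma half_mul_predn m : (m.-1 * m)./2 = 'C(m, 2).
Proof. by rewrite bin2 mulnC. Qed.

Lemma in_AE n i j : in_A n i j <->
  exists2 k, k <= n - 1 & [/\ 'C(k.+1, 2) <= i, 'C(n - k, 2) <= j & i + j <= 'C(n, 2)].
Proof.
have corner k : in_A_nk n k i j <->
    [/\ 'C(k.+1, 2) <= i, 'C(n - k, 2) <= j & i + j <= 'C(n, 2)].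
  rewrite /in_A_nk half_mulnS !subn1 half_mul_predn -bin2.
  by split=> [[? [? ?]] | [? ? ?]].
by split=> -[k kn /corner]; exists k.
Qed.

Definition trisum n (F : nat -> nat -> nat) :=
  \sum_(1 <= i < n) \sum_(1 <= j < i.+1) F i j.

Lemma trisumS n F : trisum n.+1 F = trisum n F + \sum_(1 <= j < n.+1) F n j.
Proof.
by rewrite /trisum; case: n => [|n]; [rewrite !big_geq | rewrite big_nat_recr].
Qed.

Lemma trisum_col n F :
  trisum n.+1 F = \sum_(1 <= i < n.+1) F i 1 + trisum n (fun i j => F i.+1 j.+1).
Proof.
elim: n => [|n IH]; first by rewrite /trisum !big_geq.
rewrite trisumS IH trisumS (big_nat_recl n.+1) // (big_nat_recr n.+1) //=; lia.
Qed.

Lemma trisum_diag n F :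
  trisum n.+1 F = \sum_(1 <= i < n.+1) F i i + trisum n (fun i j => F i.+1 j).
Proof.
elim: n => [|n IH]; first by rewrite /trisum !big_geq.
rewrite trisumS IH trisumS (big_nat_recr n.+1 1 (F n.+1)) //.
by rewrite (big_nat_recr n.+1 1 (fun i => F i i)) //=; lia.
Qed.

Lemma eq_trisum n F G : (forall i j, 1 <= j -> j <= i -> i < n -> F i j = G i j) ->
  trisum n F = trisum n G.
Proof.
move=> FG; apply: eq_big_nat => i /andP[i1 ilt].
by apply: eq_big_nat => j /andP[j1 jle]; apply: FG.
Qed.

Lemma leq_trisum n F G : (forall i j, 1 <= j -> j <= i -> i < n -> F i j <= G i j) ->
  trisum n F <= trisum n G.
Proof.
move=> FG; rewrite /trisum big_nat [leqRHS]big_nat; apply: leq_sum => i /andP[i1 ilt].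
by rewrite big_nat [leqRHS]big_nat; apply: leq_sum => j /andP[j1 jle]; apply: FG.
Qed.

Lemma trisumD n F G : trisum n (fun i j => F i j + G i j) = trisum n F + trisum n G.
Proof. by rewrite /trisum -big_split; apply: eq_bigr => i _; rewrite -big_split. Qed.

Lemma trisum1 n : trisum n (fun _ _ => 1) = 'C(n, 2).
Proof.
elim: n => [|n IH]; first by rewrite /trisum big_geq.
by rewrite trisumS IH sum_nat_const_nat bin2S; lia.
Qed.

Lemma sum_ind_leq N a : \sum_(1 <= i < N) (i <= a) = minn a N.-1.
Proof.
elim: N => [|[|N] IH]; try by rewrite big_geq //; lia.
by rewrite big_nat_recr //= IH; case: leqP; lia.
Qed.

Lemma sum_ind_geq N b : 1 <= b -> \sum_(1 <= i < N) (b <= i) = N - b.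
Proof.
move=> b1; elim: N => [|[|N] IH]; try by rewrite big_geq //; lia.
by rewrite big_nat_recr //= IH; case: leqP; lia.
Qed.

Lemma nonincr_steps (f : nat -> nat) lo hi : lo <= hi ->
    (forall i, lo <= i -> i < hi -> f i.+1 <= f i) ->
  f hi <= f lo /\ hi - lo <= \sum_(lo <= i < hi) (f i == f i.+1) + (f lo - f hi).
Proof.
elim: hi => [|hi IH] lohi mono; first by move: lohi; rewrite leqn0 => /eqP->; rewrite big_geq.
case: (ltngtP lo hi.+1) lohi => // [lt_lo|<-] _; last by rewrite big_geq // subnn.
have [IH1 IH2] := IH lt_lo (fun i lo_i ihi => mono i lo_i (ltnW ihi)).
have step := mono hi lt_lo (ltnSn _).
by rewrite big_nat_recr //=; case: eqP; lia.
Qed.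

Lemma nondecr_steps (f : nat -> nat) lo hi : lo <= hi ->
    (forall i, lo <= i -> i < hi -> f i <= f i.+1) ->
  f lo <= f hi /\ hi - lo <= \sum_(lo <= i < hi) (f i == f i.+1) + (f hi - f lo).
Proof.
elim: hi => [|hi IH] lohi mono; first by move: lohi; rewrite leqn0 => /eqP->; rewrite big_geq.
case: (ltngtP lo hi.+1) lohi => // [lt_lo|<-] _; last by rewrite big_geq // subnn.
have [IH1 IH2] := IH lt_lo (fun i lo_i ihi => mono i lo_i (ltnW ihi)).
have step := mono hi lt_lo (ltnSn _).
by rewrite big_nat_recr //=; case: eqP; lia.
Qed.

Lemma nonincr_between (f : nat -> nat) lo hi i : lo <= i -> i <= hi ->
  (forall i, lo <= i -> i < hi -> f i.+1 <= f i) -> f hi <= f i /\ f i <= f lo.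
Proof.
move=> lo_i i_hi mono; split.
  by case: (@nonincr_steps f i hi i_hi (fun k ik khi => mono k (leq_trans lo_i ik) khi)).
by case: (@nonincr_steps f lo i lo_i (fun k lok ki => mono k lok (leq_trans ki i_hi))).
Qed.

Lemma nondecr_between (f : nat -> nat) lo hi i : lo <= i -> i <= hi ->
  (forall i, lo <= i -> i < hi -> f i <= f i.+1) -> f lo <= f i /\ f i <= f hi.
Proof.
move=> lo_i i_hi mono; split.
  by case: (@nondecr_steps f lo i lo_i (fun k lok ki => mono k lok (leq_trans ki i_hi))).
by case: (@nondecr_steps f i hi i_hi (fun k ik khi => mono k (leq_trans lo_i ik) khi)).
Qed.

Definition interlaced n (X : nat -> nat -> nat) :=
  forall i j, 1 <= j -> j <= i -> i <= n.-1 -> X i.+1 j <= X i j /\ X i j <= X i.+1 j.+1.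

(* Sub-triangles of a Gog triangle have top row [1 + c, ..., n + c]. *)
Definition top_row n c (X : nat -> nat -> nat) := forall j, 1 <= j -> j <= n -> X n j = j + c.

Definition drop_col (X : nat -> nat -> nat) i j := X i.+1 j.+1.
Definition drop_diag (X : nat -> nat -> nat) i j := X i.+1 j.

Lemma Gog_interlaced n X : Gog n X -> interlaced n X.
Proof. by case=> [[_ il] _]. Qed.

Lemma Gog_top_row n X : Gog n X -> top_row n 0 X.
Proof. by case=> [_ [_ top]] j j1 jn; rewrite top // addn0. Qed.

Lemma inversions_col n X : inversions n.+1 X =
  \sum_(1 <= i < n.+1) (X i 1 == X i.+1 1) + inversions n (drop_col X).
Proof. exact: (trisum_col n (fun i j => X i j == X i.+1 j)). Qed.

Lemma coinversions_col n X : coinversions n.+1 X =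
  \sum_(1 <= i < n.+1) (X i 1 == X i.+1 2) + coinversions n (drop_col X).
Proof. exact: (trisum_col n (fun i j => X i j == X i.+1 j.+1)). Qed.

Lemma inversions_diag n X : inversions n.+1 X =
  \sum_(1 <= i < n.+1) (X i i == X i.+1 i) + inversions n (drop_diag X).
Proof. exact: (trisum_diag n (fun i j => X i j == X i.+1 j)). Qed.

Lemma coinversions_diag n X : coinversions n.+1 X =
  \sum_(1 <= i < n.+1) (X i i == X i.+1 i.+1) + coinversions n (drop_diag X).
Proof. exact: (trisum_diag n (fun i j => X i j == X i.+1 j.+1)). Qed.

Section Decomposition.
Variables (n c : nat) (X : nat -> nat -> nat).
Hypotheses (X_il : interlaced n.+1 X) (X_top : top_row n.+1 c X).

Lemma interlaced_drop_col : interlaced n (drop_col X).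
Proof. by move=> i j j1 ji in1; apply: X_il; lia. Qed.

Lemma interlaced_drop_diag : interlaced n (drop_diag X).
Proof. by move=> i j j1 ji in1; apply: X_il; lia. Qed.

Lemma top_row_drop_col : top_row n c.+1 (drop_col X).
Proof. by move=> j j1 jn; rewrite /drop_col X_top //; lia. Qed.

Lemma top_row_drop_diag : top_row n c (drop_diag X).
Proof. by move=> j j1 jn; rewrite /drop_diag X_top //; lia. Qed.

Lemma first_col_nonincr i : 1 <= i -> i < n.+1 -> X i.+1 1 <= X i 1.
Proof. by move=> i1 in1; case: (X_il (i := i) (j := 1)); lia. Qed.

Lemma diag_nondecr i : 1 <= i -> i < n.+1 -> X i i <= X i.+1 i.+1.
Proof. by move=> i1 in1; case: (X_il (i := i) (j := i)); lia. Qed.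

Lemma first_col_inversions : 1 + c <= X 1 1 /\
  n <= \sum_(1 <= i < n.+1) (X i 1 == X i.+1 1) + (X 1 1 - (1 + c)).
Proof.
have [] := @nonincr_steps (fun i => X i 1) 1 n.+1 (ltn0Sn _) first_col_nonincr.
by rewrite X_top //; lia.
Qed.

Lemma diag_coinversions : X 1 1 <= n.+1 + c /\
  n <= \sum_(1 <= i < n.+1) (X i i == X i.+1 i.+1) + (n.+1 + c - X 1 1).
Proof.
have [] := @nondecr_steps (fun i => X i i) 1 n.+1 (ltn0Sn _) diag_nondecr.
by rewrite X_top //; lia.
Qed.

End Decomposition.

(* With [x = X 1 1 - c], the first column has at least [n - x] inversions and the
   diagonal at least [x - 1] coinversions; recurse into the triangle left by
   removing the one of the two that carries enough. *)
Lemma inversions_or_coinversions n c X : interlaced n X -> top_row n c X ->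
  forall a, 1 <= a -> a < n ->
  'C(a.+1, 2) <= inversions n X \/ 'C(n.+1 - a, 2) <= coinversions n X.
Proof.
elim: n c X => [|n IH] c X il top a a1 an; first lia.
have [_ col] := first_col_inversions il top.
have [_ diag] := diag_coinversions il top.
case: (leqP a (n.+1 + c - X 1 1)) => [small | big].
- have [a_eq1 | a_gt1] : a = 1 \/ 1 < a by lia.
    by left; rewrite inversions_col a_eq1 binn; lia.
  have [sub_inv | sub_coinv] := IH c.+1 _ (interlaced_drop_col il) (top_row_drop_col top)
    a.-1 ltac:(lia) ltac:(lia).
    by left; rewrite inversions_col -[a in 'C(a.+1, 2)](ltn_predK a_gt1) bin2S; lia.
  right; rewrite coinversions_col.
  have ->: n.+2 - a = n.+1 - a.-1 by lia.
  lia.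
- have [a_eq | a_lt] : a = n \/ a < n by lia.
    right; rewrite coinversions_diag a_eq.
    have ->: n.+2 - n = 2 by lia.
    by rewrite binn; lia.
  have [sub_inv | sub_coinv] := IH c _ (interlaced_drop_diag il) (top_row_drop_diag top)
    a ltac:(lia) a_lt.
    by left; rewrite inversions_diag; lia.
  right; rewrite coinversions_diag.
  have ->: n.+2 - a = (n.+1 - a).+1 by lia.
  by rewrite bin2S; lia.
Qed.

(** * Necessity *)

Lemma Gog_inv_coinv_le n X : Gog n X -> inversions n X + coinversions n X <= 'C(n, 2).
Proof.
case=> [[_ _] [strict _]]; rewrite -trisumD -trisum1.
apply: leq_trisum => i j j1 ji in1.
have := strict i.+1 j j1 (leq_ltn_trans ji (ltnSn _)) in1.
by case: (X i j =P X i.+1 j); case: (X i j =P X i.+1 j.+1); lia.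
Qed.

Lemma Gog_in_A n X : Gog n X -> in_A n (inversions n X) (coinversions n X).
Proof.
move=> GX; apply/in_AE.
pose P a := (a <= n - 1) && ('C(a.+1, 2) <= inversions n X).
have P0 : exists a, P a by exists 0.
have P_bound a : P a -> a <= n - 1 by case/andP.
case: (ex_maxnP P0 P_bound) => k /andP[kn k_inv] k_max.
exists k => //; split => //; last exact: Gog_inv_coinv_le.
case: (ltnP k (n - 1)) => [k_lt | ?]; last by rewrite bin2_small //; lia.
have k1n : k.+1 < n by lia.
have [k1_inv|] := inversions_or_coinversions (Gog_interlaced GX) (Gog_top_row GX) (ltn0Sn k) k1n.
  by have := k_max k.+1; rewrite /P k1_inv andbT; lia.
by have ->: n - k = n.+1 - k.+1 by lia.
Qed.

(** * Sufficiency *)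

Definition extend_diag (Y : nat -> nat -> nat) (r : nat -> nat) i j :=
  if j < i then Y i.-1 j else r i.

Lemma inversions_extend_diag m Y r : inversions m.+1 (extend_diag Y r) =
  \sum_(1 <= i < m.+1) (r i == Y i i) + inversions m Y.
Proof.
rewrite inversions_diag; congr (_ + _).
  by apply: eq_bigr => i _; rewrite /extend_diag ltnn ltnSn.
apply: eq_trisum => i j j1 ji im; rewrite /drop_diag /extend_diag.
by have [-> ->] : (j < i.+1) /\ (j < i.+2) by lia.
Qed.

Lemma coinversions_extend_diag m Y r : coinversions m.+1 (extend_diag Y r) =
  \sum_(1 <= i < m.+1) (r i == r i.+1) + coinversions m Y.
Proof.
rewrite coinversions_diag; congr (_ + _).
  by apply: eq_bigr => i _; rewrite /extend_diag !ltnn.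
apply: eq_trisum => i j j1 ji im; rewrite /drop_diag /extend_diag.
by have [-> ->] : (j < i.+1) /\ (j.+1 < i.+2) by lia.
Qed.

Lemma Gog_extend_diag m Y r : Gog m Y -> r m.+1 = m.+1 ->
    (forall i, 1 <= i -> i <= m -> [/\ Y i i <= r i, r i <= r i.+1 & Y i i < r i.+1]) ->
  Gog m.+1 (extend_diag Y r).
Proof.
move=> [[pos il] [strict top]] r_top r_il; rewrite /extend_diag.
split; [split | split].
- move=> i j /andP[/andP[j1 ji] im].
  case: (ltnP j i) => [j_lt | i_le]; first by apply: pos; rewrite /in_tri; lia.
  case: (ltnP i m.+1) => [i_lt | i_ge].
    have [Yr _ _] := r_il i ltac:(lia) i_lt.
    by have := pos i i ltac:(rewrite /in_tri; lia); lia.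
  have ->: i = m.+1 by lia.
  by rewrite r_top.
- move=> i j j1 ji im; rewrite ltnS ji /=.
  case: (ltnP j i) => [j_lt | i_le].
    have := il i.-1 j j1 ltac:(lia) ltac:(lia).
    have ->: i.-1.+1 = i by lia.
    by rewrite ltnS j_lt.
  have <- : j = i by lia.
  by have [? ? _] := r_il j j1 ltac:(lia); rewrite ltnn.
- move=> i j j1 ji im; rewrite ji.
  case: (ltnP j.+1 i) => [j1_lt | i_le]; first by apply: strict; lia.
  have -> : i = j.+1 by lia.
  by have [_ _] := r_il j j1 ltac:(lia).
- move=> j j1 jm; case: (ltnP j m.+1) => [j_lt | j_ge]; first by rewrite top.
  by have ->: j = m.+1 by lia.
Qed.

Definition diag_profile m b (Y : nat -> nat -> nat) :=
  [/\ 1 <= b <= m, forall i, 1 <= i -> i < b -> Y i i < Y i.+1 i.+1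
    & forall i, b <= i -> i <= m -> Y i i = m].

Section DiagStep.
Variables (m b a c : nat) (Y : nat -> nat -> nat).
Hypotheses (GY : Gog m Y) (PY : diag_profile m b Y).
Hypotheses (a_lt_c : a < c) (c_le_b1 : c <= b.+1) (c_b1 : c = b.+1 -> a = b).

Definition step_diag i := if i <= a then Y i i else if i < c then (Y i i).+1 else m.+1.

Lemma profile_diag_lt i : 1 <= i -> i < b -> Y i i < m.
Proof.
move=> i1 ib; have [/andP[_ bm] incr top] := PY.
rewrite -(top b) //.
have [] := @nondecr_between (fun i => Y i i) i.+1 b b ib (leqnn b).
  by move=> k k1 kb; case: (Gog_interlaced GY (i := k) (j := k)); lia.
by have := incr i i1 ib; lia.
Qed.

Lemma profile_diag_le i : 1 <= i -> i <= m -> Y i i <= m.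
Proof.
move=> i1 im; have [_ _ top] := PY.
by case: (ltnP i b) => [ib | bi]; [have := profile_diag_lt i1 ib | rewrite top]; lia.
Qed.

Lemma step_diag_top i : c <= i -> step_diag i = m.+1.
Proof. by move=> ci; rewrite /step_diag; case: (leqP i a); case: (ltnP i c); lia. Qed.

Lemma step_diag_ge i : 1 <= i -> i <= m -> Y i i <= step_diag i.
Proof.
move=> i1 im; have := profile_diag_le i1 im.
by rewrite /step_diag; case: (leqP i a); case: (ltnP i c); lia.
Qed.

Lemma step_diag_ltS i : 1 <= i -> i < c -> step_diag i < step_diag i.+1.
Proof.
move=> i1 ic; have [/andP[_ bm] incr _] := PY.
case: (ltnP i.+1 c) => [i1c | ci1].
  have ib : i < b by lia.
  have := incr i i1 ib; have := diag_nondecr (Gog_interlaced GY) i1.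
  by rewrite /step_diag ic i1c; case: (leqP i a); case: (leqP i.+1 a); lia.
rewrite (step_diag_top ci1) /step_diag ic.
case: (leqP i a) => [ia | ai]; first by have := profile_diag_le i1 ltac:(lia); lia.
by have := profile_diag_lt i1 ltac:(lia); lia.
Qed.

Lemma step_diag_eqY i : 1 <= i -> i <= m -> (step_diag i == Y i i) = (i <= a).
Proof.
move=> i1 im; have := profile_diag_le i1 im.
by rewrite /step_diag; case: (leqP i a) => [|ai]; rewrite ?eqxx //; case: ifP => _ Ym; apply/eqP; lia.
Qed.

Lemma step_diag_eqS i : 1 <= i -> (step_diag i == step_diag i.+1) = (c <= i).
Proof.
move=> i1; case: (ltnP i c) => [ic | ci]; last by rewrite !step_diag_top ?eqxx //; lia.
by have := step_diag_ltS i1 ic; case: eqP => // ->; rewrite ltnn.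
Qed.

Lemma Gog_diag_step : exists X, [/\ Gog m.+1 X, diag_profile m.+1 c X,
  inversions m.+1 X = inversions m Y + a & coinversions m.+1 X = coinversions m Y + (m.+1 - c)].
Proof.
have [/andP[_ bm] _ _] := PY.
have diagX i : extend_diag Y step_diag i i = step_diag i by rewrite /extend_diag ltnn.
exists (extend_diag Y step_diag); split.
- apply: (Gog_extend_diag GY) => [|i i1 im]; first by rewrite step_diag_top //; lia.
  have Yr := step_diag_ge i1 im; have Ym := profile_diag_le i1 im.
  case: (ltnP i c) => [ic | ci]; first by have := step_diag_ltS i1 ic; split; lia.
  by rewrite !step_diag_top //; try lia; split; lia.
- split; [lia | move=> i i1 ic | move=> i ci _]; rewrite !diagX.
    exact: step_diag_ltS.
  exact: step_diag_top.
- rewrite inversions_extend_diag addnC; congr (_ + _).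
  have -> : \sum_(1 <= i < m.+1) (step_diag i == Y i i) = \sum_(1 <= i < m.+1) (i <= a).
    by apply: eq_big_nat => i /andP[i1 im]; rewrite step_diag_eqY.
  by rewrite sum_ind_leq; lia.
- rewrite coinversions_extend_diag addnC; congr (_ + _).
  have -> : \sum_(1 <= i < m.+1) (step_diag i == step_diag i.+1) = \sum_(1 <= i < m.+1) (c <= i).
    by apply: eq_big_nat => i /andP[i1 _]; rewrite step_diag_eqS.
  by rewrite sum_ind_geq //; lia.
Qed.

End DiagStep.

Lemma Gog_staircase k : exists Y, [/\ Gog k.+1 Y, diag_profile k.+1 k.+1 Y,
  inversions k.+1 Y = 'C(k.+1, 2) & coinversions k.+1 Y = 0].
Proof.
exists (fun _ j => j); split.
- by split; [split=> i j; rewrite /in_tri; lia | split=> //; lia].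
- by split=> //; lia.
- by rewrite -(trisum1 k.+1); apply: eq_trisum => i j _ _ _; rewrite eqxx.
- by apply: big1 => i _; apply: big1 => j _; rewrite ltn_eqF.
Qed.

(* Step [s] of the induction adds [s.+1] coinversions, plus up to [k] more
   inversions or coinversions as required; the last clause keeps the strictly
   increasing part of the diagonal long enough for the next step. *)
Lemma Gog_corner_region k t P Q : P + Q <= k * t -> exists b Y,
  [/\ Gog (k.+1 + t) Y, diag_profile (k.+1 + t) b Y,
      inversions (k.+1 + t) Y = 'C(k.+1, 2) + P,
      coinversions (k.+1 + t) Y = 'C(t.+1, 2) + Q & Q = 0 -> b = k.+1].
Proof.
elim: t P Q => [|t IH] P Q PQ.
  have [Y [GY PY invY coinvY]] := Gog_staircase k.
  by exists k.+1, Y; rewrite addn0 invY coinvY (@bin2_small 1) //; split => //; lia.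
have [e e_def] : exists e, e = minn Q k by eexists.
have [a a_def] : exists a, a = minn P (k - e) by eexists.
have PQ' : (P - a) + (Q - e) <= k * t by rewrite mulnS in PQ; lia.
have [b [Y [GY PY invY coinvY Q0]]] := IH _ _ PQ'.
have [/andP[b1 _] _ _] := PY.
have b_ge : k - e < b by case: (Q - e =P 0) => [/Q0 | ]; lia.
have [X [GX PX invX coinvX]] :=
  Gog_diag_step GY PY (a := a) (c := k.+1 - e) ltac:(lia) ltac:(lia) ltac:(lia).
exists (k.+1 - e), X; rewrite addnS; split => //.
- by rewrite invX invY; lia.
- by rewrite coinvX coinvY (bin2S t.+1); lia.
- by move=> Q_0; rewrite e_def Q_0; lia.
Qed.

Lemma in_A_Gog n i j : 1 <= n -> in_A n i j ->
  exists X, [/\ Gog n X, inversions n X = i & coinversions n X = j].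
Proof.
move=> n1 /in_AE[k kn [ki kj ijn]].
have [t n_eq] : exists t, n = k.+1 + t by exists (n - k.+1); lia.
have nk : n - k = t.+1 by lia.
rewrite n_eq bin2_add in ijn; rewrite nk in kj; rewrite n_eq.
have [b [Y [GY _ invY coinvY _]]] :=
  @Gog_corner_region k t (i - 'C(k.+1, 2)) (j - 'C(t.+1, 2)) ltac:(lia).
by exists Y; split => //; lia.
Qed.

Lemma in_A_corner n k : k <= n - 1 -> in_A n 'C(k.+1, 2) 'C(n - k, 2).
Proof.
move=> kn; apply/in_AE; exists k => //; split => //.
case: n kn => [|n] kn; first by rewrite bin2_small.
have ->: n.+1 = k.+1 + (n - k) by lia.
by rewrite bin2_add (_ : k.+1 + (n - k) - k = (n - k).+1) ?leq_addr //; lia.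
Qed.

(** * Uniqueness at the corners *)

Definition under_corner n c k (X : nat -> nat -> nat) :=
  [/\ interlaced n X, top_row n c X,
      inversions n X <= 'C(k.+1, 2) & coinversions n X <= 'C(n - k, 2)].

(* Otherwise the first column (resp. the diagonal) carries so many inversions
   (resp. coinversions) that the dichotomy on the remaining triangle breaks a bound. *)
Lemma under_corner_bottom n c k X : k <= n -> under_corner n.+1 c k X -> X 1 1 = n.+1 - k + c.
Proof.
case: n => [|n] kn [il top inv coinv]; first by rewrite top //; lia.
have [col_lo col] := first_col_inversions il top.
have [diag_hi diag] := diag_coinversions il top.
have := bin2S k.
case: (ltngtP (X 1 1) (n.+2 - k + c)) => // [small | big] Ck.
- have invE := inversions_col n.+1 X.
  case: (leqP k 1) => [k_le1 | k_gt1]; first by rewrite (@bin2_small k) in Ck; lia.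
  have [sub_inv | sub_coinv] := inversions_or_coinversions (interlaced_drop_col il)
    (top_row_drop_col top) (a := k.-1) ltac:(lia) ltac:(lia).
    by rewrite (ltn_predK k_gt1) in sub_inv; lia.
  have coinvE := coinversions_col n.+1 X.
  by rewrite (_ : n.+2 - k.-1 = (n.+2 - k).+1) ?bin2S in sub_coinv; lia.
- have coinvE := coinversions_diag n.+1 X.
  case: (leqP n k) => [n_le | k_lt].
    have [nk | nk] : n.+2 - k = 1 \/ n.+2 - k = 2 by lia.
      by rewrite nk (@bin2_small 1) in coinv; lia.
    by rewrite nk binn in coinv; lia.
  have [sub_inv | sub_coinv] := inversions_or_coinversions (interlaced_drop_diag il)
    (top_row_drop_diag top) (a := k.+1) ltac:(lia) ltac:(lia).
    by have := inversions_diag n.+1 X; rewrite bin2S in sub_inv; lia.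
  rewrite (_ : n.+2 - k.+1 = n.+1 - k) in sub_coinv; last by lia.
  by rewrite (_ : n.+2 - k = (n.+1 - k).+1) ?bin2S in coinv; lia.
Qed.

Lemma under_corner_drop_col n c k X : 1 <= k <= n -> under_corner n.+1 c k X ->
  under_corner n c.+1 k.-1 (drop_col X).
Proof.
move=> /andP[k1 kn] CX; have bottom := under_corner_bottom kn CX.
case: CX => il top inv coinv; have [_ col] := first_col_inversions il top.
split; [exact: interlaced_drop_col | exact: top_row_drop_col | |].
  by rewrite inversions_col -(ltn_predK k1) bin2S in inv; lia.
by have := coinversions_col n X; rewrite (_ : n - k.-1 = n.+1 - k); lia.
Qed.

Lemma under_corner_drop_diag n c k X : k < n -> under_corner n.+1 c k X ->
  under_corner n c k (drop_diag X).
Proof.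
move=> kn CX; have bottom := under_corner_bottom (ltnW kn) CX.
case: CX => il top inv coinv; have [_ diag] := diag_coinversions il top.
split; [exact: interlaced_drop_diag | exact: top_row_drop_diag | |].
  by rewrite inversions_diag in inv; lia.
by rewrite coinversions_diag (_ : n.+1 - k = (n - k).+1) ?bin2S in coinv; lia.
Qed.

Lemma under_corner_first_col n c X : under_corner n.+1 c n X ->
  forall i, 1 <= i -> i <= n.+1 -> X i 1 = 1 + c.
Proof.
move=> CX i i1 in1; have := under_corner_bottom (leqnn n) CX.
case: CX => il top _ _; have [] := nonincr_between i1 in1 (first_col_nonincr il).
by rewrite top //; lia.
Qed.

Lemma under_corner_diag n c X : under_corner n.+1 c 0 X ->
  forall i, 1 <= i -> i <= n.+1 -> X i i = n.+1 + c.
Proof.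
move=> CX i i1 in1; have := under_corner_bottom (leq0n n) CX.
case: CX => il top _ _; have [] := nondecr_between i1 in1 (diag_nondecr il).
by rewrite top //; lia.
Qed.

Lemma under_corner_unique n c k X Y : k <= n ->
  under_corner n.+1 c k X -> under_corner n.+1 c k Y ->
  forall i j, in_tri n.+1 i j -> X i j = Y i j.
Proof.
elim: n c k X Y => [|n IH] c k X Y kn CX CY i j /andP[/andP[j1 ji] in1].
  have [_ topX _ _] := CX; have [_ topY _ _] := CY.
  have [-> ->] : i = 1 /\ j = 1 by lia.
  by rewrite topX ?topY.
have IH_col : 1 <= k -> forall i j, 1 < j -> j <= i -> i <= n.+2 -> X i j = Y i j.
  move=> k1 [|i'] [|j'] j2 ji' in'; try lia.
  have kn' : 1 <= k <= n.+1 by lia.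
  exact: (IH c.+1 k.-1 _ _ ltac:(lia) (under_corner_drop_col kn' CX)
    (under_corner_drop_col kn' CY) i' j' ltac:(rewrite /in_tri; lia)).
have IH_diag : k < n.+1 -> forall i j, 1 <= j -> j < i -> i <= n.+2 -> X i j = Y i j.
  move=> kn' [|i'] j' j1' ji' in'; first lia.
  exact: (IH c k _ _ kn' (under_corner_drop_diag kn' CX)
    (under_corner_drop_diag kn' CY) i' j' ltac:(rewrite /in_tri; lia)).
have [i_eq1 | i_gt1] : i = 1 \/ 1 < i by lia.
  have [-> ->] : i = 1 /\ j = 1 by lia.
  by rewrite (under_corner_bottom kn CX) (under_corner_bottom kn CY).
case: (ltnP k n.+1) => [k_lt | k_ge].
  case: (ltnP j i) => [j_lt | i_le]; first exact: IH_diag.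
  have ->: j = i by lia.
  case: (posnP k) => [k0 | k_gt0]; last exact: IH_col.
  move: CX CY; rewrite k0 => CX CY.
  by rewrite (under_corner_diag CX) ?(under_corner_diag CY) //; lia.
case: (ltnP 1 j) => [j_gt1 | j_le1]; first exact: (IH_col ltac:(lia)).
have ->: j = 1 by lia.
move: CX CY; have ->: k = n.+1 by lia.
by move=> CX CY; rewrite (under_corner_first_col CX) ?(under_corner_first_col CY) //; lia.
Qed.

Lemma Gog_under_corner n k X : Gog n X ->
  inversions n X <= 'C(k.+1, 2) -> coinversions n X <= 'C(n - k, 2) -> under_corner n 0 k X.
Proof. by move=> GX; split; [exact: Gog_interlaced | exact: Gog_top_row |..]. Qed.

Theorem theorem11p1 (n : nat) (hn : 1 <= n) :
  (forall i j : nat,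
     (exists X, [/\ Gog n X, inversions n X = i & coinversions n X = j])
     <-> in_A n i j) /\
  (forall k : nat, k <= n - 1 ->
     exists X,
       [/\ Gog n X,
           inversions n X = (k * k.+1)./2,
           coinversions n X = ((n - k - 1) * (n - k))./2,
           X 1 1 = n - k &
           forall Y, Gog n Y ->
             inversions n Y = (k * k.+1)./2 ->
             coinversions n Y = ((n - k - 1) * (n - k))./2 ->
             forall a b, in_tri n a b -> Y a b = X a b]).
Proof.
split=> [i j | k kn].
  split=> [[X [GX <- <-]] | ]; [exact: Gog_in_A | exact: in_A_Gog].
have [X [GX invX coinvX]] := in_A_Gog hn (in_A_corner kn).
case: n hn kn GX invX coinvX => [|n] // _ kn GX invX coinvX.
have {}kn : k <= n by lia.
have CX := Gog_under_corner GX (eq_leq invX) (eq_leq coinvX).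
exists X; rewrite half_mulnS subn1 half_mul_predn; split => //.
  by rewrite (under_corner_bottom kn CX) addn0.
move=> Y GY invY coinvY a b ab.
exact: under_corner_unique kn (Gog_under_corner GY (eq_leq invY) (eq_leq coinvY)) CX a b ab.
Qed.
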